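(* Let $\alpha\in(0,1)$ and let $G=(V,E)$ be a finite connected graph satisfying CD$_\alpha(F;0)$ for a CD-function $F$ with relaxation function $\varphi$. Suppose $u:[0,\infty)\times V\to(0,\infty)$ solves the heat equation on $G$. Then $$-\frac{\Delta(u^\alpha)}{\alpha u^\alpha}=\mathcal L_\alpha(\log u)\le\varphi(t)\quad\text{on }(0,\infty)\times V,$$ and consequently $$\partial_t(\log u)\ge\Psi_\Upsilon(\log u)-\tfrac1\alpha\Psi_{\Upsilon_\alpha}(\log u)-\varphi(t)\quad\text{on }(0,\infty)\times V.$$
   Context: Graphs are undirected, edge weights $w_{xy}=w_{yx}>0$, $\mu:V\to(0,\infty)$, $\Delta u(x)=\frac1{\mu(x)}\sum_{y\sim x}w_{xy}(u(y)-u(x))$, $L=-\Delta$, $\Psi_H(v)(x)=\frac1{\mu(x)}\sum_{y\sim x}w_{xy}H(v(y)-v(x))$, $\Upsilon(z)=e^z-1-z$, $\Upsilon_\alpha(z)=\Upsilon(\alpha z)$. $\mathcal L_\alpha(v)(x)=-\frac1\alpha\Psi_{\Upsilon'}(\alpha v)(x)$; $\mathcal C_\alpha(v)(x)=\frac1{\mu(x)}\sum_{y\sim x}w_{xy}e^{\alpha(v(y)-v(x))}(\Psi_{\Upsilon'}(v)(y)-\Psi_{\Upsilon'}(v)(x))$. A CD-function is a continuous $F:[0,\infty)\to[0,\infty)$ with $F(0)=0$, $F(x)/x$ strictly increasing on $(0,\infty)$, $\int_1^\infty dr/F(r)<\infty$; its relaxation function is the unique positive solution of $\dot\varphi+F(\varphi)=0$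 on $(0,\infty)$ with $\varphi(0+)=\infty$. $G$ satisfies CD$_\alpha(F;0)$ if for every $x\in V$ and $v:V\to\mathbb R$ with $\mathcal L_\alpha(v)(x)>0$ and $\mathcal L_\alpha(v)(x)\ge\mathcal L_\alpha(v)(y)$ for all $y\sim x$, $\mathcal C_\alpha(v)(x)\ge F(Lv(x))$. A solution of the heat equation is $u$, $C^1$ in $t$, with $\partial_tu=\Delta u$ on $[0,\infty)\times V$. *)

From Stdlib Require Import Reals Lra List.
Open Scope R_scope.

(* Weights are a function w : V -> V -> R with
   w x y = w y x >= 0; x ~ y  iff  w x y > 0 (so w x y = 0 off edges),
   and no loops (w x x = 0).  mu : V -> (0,oo). *)

Definition finite_enum {V : Type} (vs : list V) : Prop :=
  NoDup vs /\ forall x : V, In x vs.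

Definition adj {V : Type} (w : V -> V -> R) (x y : V) : Prop := 0 < w x y.

Definition weighted_graph {V : Type} (vs : list V) (w : V -> V -> R)
  (mu : V -> R) : Prop :=
  finite_enum vs /\
  (forall x y, w x y = w y x) /\
  (forall x y, 0 <= w x y) /\
  (forall x, w x x = 0) /\
  (forall x, 0 < mu x).

Inductive reachable {V : Type} (w : V -> V -> R) : V -> V -> Prop :=
| reach_refl : forall x, reachable w x x
| reach_step : forall x y z, adj w x y -> reachable w y z -> reachable w x z.

Definition connected {V : Type} (w : V -> V -> R) : Prop :=
  forall x y : V, reachable w x y.

Definition vsum {V : Type} (vs : list V) (f : V -> R) : R :=
  fold_right (fun y acc => f y + acc) 0 vs.

(* Sum over neighbours y ~ x of w_xy * g y: non-neighbours have w_xy = 0. *)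
Definition Laplacian {V : Type} (vs : list V) (w : V -> V -> R) (mu : V -> R)
  (u : V -> R) (x : V) : R :=
  / mu x * vsum vs (fun y => w x y * (u y - u x)).

Definition Lop {V : Type} (vs : list V) (w : V -> V -> R) (mu : V -> R)
  (u : V -> R) (x : V) : R := - Laplacian vs w mu u x.

Definition Psi {V : Type} (vs : list V) (w : V -> V -> R) (mu : V -> R)
  (H : R -> R) (v : V -> R) (x : V) : R :=
  / mu x * vsum vs (fun y => w x y * H (v y - v x)).

Definition Upsilon (z : R) : R := exp z - 1 - z.
Definition Upsilon' (z : R) : R := exp z - 1.
Definition Upsilon_a (a z : R) : R := Upsilon (a * z).

Definition Lalpha {V : Type} (vs : list V) (w : V -> V -> R) (mu : V -> R)
  (a : R) (v : V -> R) (x : V) : R :=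
  - (/ a) * Psi vs w mu Upsilon' (fun y => a * v y) x.

Definition Calpha {V : Type} (vs : list V) (w : V -> V -> R) (mu : V -> R)
  (a : R) (v : V -> R) (x : V) : R :=
  / mu x * vsum vs (fun y => w x y * exp (a * (v y - v x)) *
     (Psi vs w mu Upsilon' v y - Psi vs w mu Upsilon' v x)).

Definition CD_function (F : R -> R) : Prop :=
  (forall x, 0 <= x -> limit1_in F (fun y => 0 <= y) (F x) x) /\
  (forall x, 0 <= x -> 0 <= F x) /\
  F 0 = 0 /\
  (forall x y, 0 < x -> x < y -> F x / x < F y / y) /\
  (* int_1^oo dr / F(r) < oo  (integrand is positive) *)
  (exists M : R, forall b : R, 1 <= b ->
     forall pr : Riemann_integrable (fun r => / F r) 1 b, RiemannInt pr <= M).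

Definition relaxation_function (F phi : R -> R) : Prop :=
  (forall t, 0 < t -> 0 < phi t) /\
  (forall t, 0 < t -> derivable_pt_lim phi t (- F (phi t))) /\
  (forall M : R, exists delta : R, 0 < delta /\
     forall t, 0 < t < delta -> M < phi t).

Definition CD_alpha {V : Type} (vs : list V) (w : V -> V -> R) (mu : V -> R)
  (a : R) (F : R -> R) : Prop :=
  forall (x : V) (v : V -> R),
    0 < Lalpha vs w mu a v x ->
    (forall y, adj w x y -> Lalpha vs w mu a v y <= Lalpha vs w mu a v x) ->
    F (Lop vs w mu v x) <= Calpha vs w mu a v x.

(* ---------- Heat equation ----------
   u : [0,oo) x V -> R, C^1 in t, d/dt u = Delta u on [0,oo) x V.
   At t = 0 the derivative is one-sided (from the right). Since the
   derivative equals Delta u(t), which is continuous in t wherever u is,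
   C^1 is automatic from these conditions. *)
Definition heat_solution {V : Type} (vs : list V) (w : V -> V -> R)
  (mu : V -> R) (u : R -> V -> R) : Prop :=
  (forall x t, 0 < t ->
     derivable_pt_lim (fun s => u s x) t (Laplacian vs w mu (u t) x)) /\
  (forall x (eps : R), 0 < eps -> exists delta : R, 0 < delta /\
     forall h, 0 < h < delta ->
       Rabs ((u h x - u 0 x) / h - Laplacian vs w mu (u 0) x) < eps).

From Stdlib Require Import Reals Lra List Classical.
Open Scope R_scope.

(* With v = log u one has d/dt v = Psi_{Upsilon'}(v), and both the identity
   for -Delta(u^a)/(a u^a) and the bound on d/dt log u are pointwise algebra.
   For the estimate, W(t) = L_a(log u(t)) evolves by d/dt W = -C_a, while the
   relaxation function solves phi' = -F(phi).  W is bounded above (by a degree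
   bound) and phi blows up at 0+, so if W ever exceeded phi there would be a
   first time T and a vertex y with W(T,y) = phi(T) = max W(T,.); there
   d/dt (W_y - phi) >= 0 from the left, i.e. C_a <= F(W).  But at such a
   maximum CD_a(F;0) gives C_a >= F(L v) > F(W), because 0 < L_a v < L v and
   F(x)/x is increasing. *)

Lemma vsum_ext {V} (l : list V) (f g : V -> R) :
  (forall y, f y = g y) -> vsum l f = vsum l g.
Proof. intros H; induction l as [|y l IH]; simpl; [reflexivity|now rewrite H, IH]. Qed.

Lemma vsum_scal_l {V} (l : list V) (c : R) (f : V -> R) :
  vsum l (fun y => c * f y) = c * vsum l f.
Proof. induction l as [|y l IH]; simpl; [ring|rewrite IH; ring]. Qed.

Lemma vsum_plus {V} (l : list V) (f g : V -> R) :
  vsum l (fun y => f y + g y) = vsum l f + vsum l g.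
Proof. induction l as [|y l IH]; simpl; [ring|rewrite IH; ring]. Qed.

Lemma vsum_le {V} (l : list V) (f g : V -> R) :
  (forall y, f y <= g y) -> vsum l f <= vsum l g.
Proof. intros H; induction l as [|y l IH]; simpl; [lra|specialize (H y); lra]. Qed.

Lemma vsum_nonneg {V} (l : list V) (f : V -> R) :
  (forall y, 0 <= f y) -> 0 <= vsum l f.
Proof. intros H; induction l as [|y l IH]; simpl; [lra|specialize (H y); lra]. Qed.

Lemma vsum_term_le {V} (l : list V) (f : V -> R) (z : V) :
  (forall y, 0 <= f y) -> In z l -> f z <= vsum l f.
Proof.
  intros H; induction l as [|y l IH]; simpl; [tauto|].
  intros [<-|Hz].
  - pose proof (vsum_nonneg l f H); lra.
  - specialize (IH Hz); specialize (H y); lra.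
Qed.

Lemma vsum_neg_ex {V} (l : list V) (f : V -> R) :
  vsum l f < 0 -> exists y, f y < 0.
Proof.
  induction l as [|y l IH]; simpl; intros H; [lra|].
  destruct (Rlt_dec (f y) 0); [eauto|apply IH; lra].
Qed.

Lemma derivable_pt_lim_vsum {V} (l : list V) (f : R -> V -> R) (f' : V -> R) t :
  (forall y, derivable_pt_lim (fun s => f s y) t (f' y)) ->
  derivable_pt_lim (fun s => vsum l (f s)) t (vsum l f').
Proof.
  intros H; induction l as [|y l IH]; simpl.
  - apply derivable_pt_lim_const.
  - exact (derivable_pt_lim_plus _ _ t _ _ (H y) IH).
Qed.

Lemma finite_common_radius {V} (l : list V) (P : V -> R -> Prop) :
  (forall y, exists e, 0 < e /\ forall h, Rabs h < e -> P y h) ->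
  exists e, 0 < e /\ forall y, In y l -> forall h, Rabs h < e -> P y h.
Proof.
  intros H; induction l as [|y l [e1 [He1 H1]]].
  - exists 1; split; [lra|intros y []].
  - destruct (H y) as [e2 [He2 H2]].
    exists (Rmin e1 e2); split; [now apply Rmin_pos|].
    pose proof (Rmin_l e1 e2); pose proof (Rmin_r e1 e2).
    intros z [<-|Hz] h Hh; [apply H2|apply H1]; auto; lra.
Qed.

Lemma continuity_pt_pos_near (f : R -> R) (T : R) :
  continuity_pt f T -> 0 < f T ->
  exists d, 0 < d /\ forall r, Rabs (r - T) < d -> 0 < f r.
Proof.
  intros Hf HT. destruct (Hf (f T) HT) as [d [Hd Hnear]].
  exists d; split; [lra|]. intros r Hr.
  destruct (Req_dec r T) as [->|Hne]; [exact HT|].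
  assert (Hclose : Rabs (f r - f T) < f T)
    by (apply (Hnear r); split; [split; [exact I|auto]|exact Hr]).
  apply Rabs_def2 in Hclose; lra.
Qed.

Lemma derivable_pt_lim_left_max (h : R -> R) (T l eta : R) :
  derivable_pt_lim h T l -> 0 < eta ->
  (forall r, T - eta < r < T -> h r <= h T) -> 0 <= l.
Proof.
  intros Hd Heta Hmax. apply Rnot_lt_le; intros Hl.
  destruct (Hd (- l / 2)) as [[d Hdpos] Hq]; [lra|]; simpl in Hq.
  pose proof (Rmin_l d eta); pose proof (Rmin_r d eta).
  assert (0 < Rmin d eta) by now apply Rmin_pos.
  set (k := - Rmin d eta / 2).
  assert (Hk : k <> 0 /\ Rabs k < d) by (unfold k; rewrite Rabs_left; lra).
  specialize (Hq k (proj1 Hk) (proj2 Hk)).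
  specialize (Hmax (T + k) ltac:(unfold k; lra)).
  set (q := (h (T + k) - h T) / k) in Hq.
  assert (q * k = h (T + k) - h T) by (unfold q; field; apply Hk).
  apply Rabs_def2 in Hq. assert (k < 0) by (unfold k; lra). nra.
Qed.

Lemma first_zero_crossing {V} (vs : list V) (f : R -> V -> R) (t : R) (x : V) :
  (forall y, In y vs) ->
  (forall s y, 0 < s -> continuity_pt (fun r => f r y) s) ->
  (forall y, exists delta, 0 < delta /\ forall s, 0 < s < delta -> 0 < f s y) ->
  0 < t -> f t x < 0 ->
  exists T y, 0 < T /\ f T y = 0 /\ (forall z, 0 <= f T z) /\
    (forall r z, 0 < r < T -> 0 < f r z).
Proof.
  intros Hall Hcont Hinit Ht Hneg.
  destruct (finite_common_radius vs (fun y h => 0 < h -> 0 < f h y)) as [e [He Hstart]].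
  { intros y. destruct (Hinit y) as [d [Hd Hpos]].
    exists d; split; [exact Hd|]. intros h Hh Hh0. apply Hpos. rewrite Rabs_right in Hh; lra. }
  set (A := fun s => forall r z, 0 < r < s -> 0 < f r z).
  assert (HAe : A e).
  { intros r z Hr. apply (Hstart z (Hall z) r); [rewrite Rabs_right|]; lra. }
  assert (HAt : forall s, A s -> s <= t).
  { intros s Hs. apply Rnot_lt_le; intros Hts. specialize (Hs t x ltac:(lra)). lra. }
  destruct (completeness A) as [T [HTub HTlub]]; [exists t; exact HAt|exists e; exact HAe|].
  assert (HTe : e <= T) by exact (HTub e HAe).
  assert (Hbefore : forall r z, 0 < r < T -> 0 < f r z).
  { intros r z Hr. apply Rnot_le_lt; intros Hfr.
    assert (T <= r); [|lra].
    apply HTlub; intros s Hs. apply Rnot_lt_le; intros Hrs.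
    specialize (Hs r z ltac:(lra)). lra. }
  assert (Hat : forall z, 0 <= f T z).
  { intros z. apply Rnot_lt_le; intros HTz.
    destruct (continuity_pt_pos_near (fun r => - f r z) T) as [d [Hd Hnear]].
    { apply continuity_pt_opp, Hcont; lra. }
    { simpl; lra. }
    set (r := T - Rmin d T / 2).
    assert (0 < Rmin d T) by (apply Rmin_pos; lra).
    pose proof (Rmin_l d T); pose proof (Rmin_r d T).
    specialize (Hnear r ltac:(unfold r; rewrite Rabs_left; lra)).
    specialize (Hbefore r z ltac:(unfold r; lra)). simpl in Hnear; lra. }
  destruct (classic (exists y, f T y = 0)) as [[y Hy]|Hnone].
  - exists T, y; repeat split; auto; lra.
  - exfalso.
    destruct (finite_common_radius vs (fun z h => 0 < f (T + h) z)) as [e' [He' Hafter]].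
    { intros z. assert (HTz : 0 < f T z).
      { destruct (Rle_lt_or_eq_dec _ _ (Hat z)) as [|Hz]; [auto|exfalso; eauto]. }
      destruct (continuity_pt_pos_near (fun r => f r z) T (Hcont T z ltac:(lra)) HTz)
        as [d [Hd Hnear]].
      exists d; split; [exact Hd|]. intros h Hh. apply Hnear.
      now replace (T + h - T) with h by ring. }
    assert (HA' : A (T + e' / 2)).
    { intros r z Hr. destruct (Rlt_le_dec r T) as [|HTr]; [apply Hbefore; lra|].
      replace r with (T + (r - T)) by ring.
      apply Hafter; [apply Hall|rewrite Rabs_right; lra]. }
    specialize (HTub _ HA'). lra.
Qed.

Lemma comparison_principle {V} (vs : list V) (W C : R -> V -> R) (F phi : R -> R) :
  (forall y, In y vs) ->
  (forall s y, 0 < s -> derivable_pt_lim (fun r => W r y) s (- C s y)) ->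
  (forall s, 0 < s -> derivable_pt_lim phi s (- F (phi s))) ->
  (forall s, 0 < s -> 0 < phi s) ->
  (forall M, exists delta, 0 < delta /\ forall s, 0 < s < delta -> M < phi s) ->
  (forall y, exists K, forall s, 0 < s -> W s y <= K) ->
  (forall s y, 0 < s -> 0 < W s y -> (forall z, W s z <= W s y) -> F (W s y) < C s y) ->
  forall t x, 0 < t -> W t x <= phi t.
Proof.
  intros Hall HdW Hdphi Hphipos Hblowup Hbound Hstrict t x Ht.
  apply Rnot_lt_le; intros Hover.
  set (gap := fun s y => phi s - W s y).
  destruct (first_zero_crossing vs gap t x) as (T & y & HT & Htouch & Hbelow & Hbefore);
    [exact Hall| | |exact Ht|unfold gap; lra|].
  - intros s y Hs. apply derivable_continuous_pt.
    exists (- F (phi s) - - C s y). exact (derivable_pt_lim_minus _ _ s _ _ (Hdphi s Hs) (HdW s y Hs)).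
  - intros y. destruct (Hbound y) as [K HK]. destruct (Hblowup K) as [d [Hd Hphi]].
    exists d; split; [exact Hd|]. intros s Hs. unfold gap.
    specialize (HK s ltac:(lra)); specialize (Hphi s Hs); lra.
  - unfold gap in *.
    assert (Hrate : 0 <= - C T y - - F (phi T)).
    { apply (derivable_pt_lim_left_max (fun r => W r y - phi r) T _ T);
        [exact (derivable_pt_lim_minus _ _ T _ _ (HdW T y HT) (Hdphi T HT))|exact HT|].
      intros r Hr. specialize (Hbefore r y ltac:(lra)). lra. }
    assert (HWT : W T y = phi T) by lra.
    assert (Hlt : F (W T y) < C T y).
    { apply Hstrict; [exact HT|rewrite HWT; auto|].
      intros z; specialize (Hbelow z); lra. }
    rewrite HWT in Hlt; lra.
Qed.

Lemma Upsilon_nonneg (z : R) : 0 <= Upsilon z.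
Proof. unfold Upsilon; pose proof (exp_ineq1_le z); lra. Qed.

Lemma Upsilon_pos (z : R) : z <> 0 -> 0 < Upsilon z.
Proof. intros Hz; unfold Upsilon; pose proof (exp_ineq1 z Hz); lra. Qed.

Lemma exp_sub (x y : R) : exp (x - y) = exp x / exp y.
Proof. unfold Rminus, Rdiv; now rewrite exp_plus, exp_Ropp. Qed.

Lemma lt_of_ratio_increasing (F : R -> R) (x y : R) :
  (forall x y, 0 < x -> x < y -> F x / x < F y / y) -> 0 <= F y ->
  0 < x -> x < y -> F x < F y.
Proof.
  intros Hratio HFy Hx Hxy. pose proof (Hratio x y Hx Hxy) as Hq.
  assert (HFx : F x = x * (F x / x)) by (field; lra).
  assert (0 <= F y / y) by (apply Rmult_le_pos; [lra|left; apply Rinv_0_lt_compat; lra]).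
  assert (HFy' : F y = y * (F y / y)) by (field; lra).
  nra.
Qed.

Section Operators.
Context {V : Type} (vs : list V) (w : V -> V -> R) (mu : V -> R).

Lemma Psi_ext (H : R -> R) (v v' : V -> R) (x : V) :
  (forall y, v y = v' y) -> Psi vs w mu H v x = Psi vs w mu H v' x.
Proof. intros Hv; unfold Psi; f_equal; apply vsum_ext; intros y; now rewrite !Hv. Qed.

Lemma Psi_Upsilon'_ln (f : V -> R) (x : V) :
  (forall y, 0 < f y) ->
  Psi vs w mu Upsilon' (fun y => ln (f y)) x = Laplacian vs w mu f x / f x.
Proof.
  intros Hf. unfold Psi, Laplacian, Upsilon'.
  rewrite (vsum_ext vs _ (fun y => / f x * (w x y * (f y - f x)))), vsum_scal_l.
  - unfold Rdiv; ring.
  - intros y. rewrite exp_sub, !exp_ln by apply Hf. field. apply Rgt_not_eq, Hf.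
Qed.

Lemma Lalpha_ln (a : R) (f : V -> R) (x : V) :
  a <> 0 -> (forall y, 0 < f y) ->
  - Laplacian vs w mu (fun y => Rpower (f y) a) x / (a * Rpower (f x) a)
    = Lalpha vs w mu a (fun y => ln (f y)) x.
Proof.
  intros Ha Hf. unfold Lalpha.
  rewrite (Psi_ext _ _ (fun y => ln (Rpower (f y) a)))
    by (intros y; unfold Rpower; now rewrite ln_exp).
  rewrite Psi_Upsilon'_ln by (intros y; apply exp_pos).
  assert (Rpower (f x) a <> 0) by apply Rgt_not_eq, exp_pos.
  field; auto.
Qed.

Lemma Psi_Upsilon_split (v : V -> R) (x : V) :
  Psi vs w mu Upsilon v x = Psi vs w mu Upsilon' v x + Lop vs w mu v x.
Proof.
  unfold Lop, Laplacian, Psi, Upsilon, Upsilon'.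
  rewrite (vsum_ext vs _ (fun y => w x y * (exp (v y - v x) - 1) + -1 * (w x y * (v y - v x))))
    by (intros; ring).
  rewrite vsum_plus, vsum_scal_l; ring.
Qed.

Lemma derivable_pt_lim_ln_heat (u : R -> V -> R) (t : R) (y : V) :
  (forall z, 0 < u t z) ->
  derivable_pt_lim (fun s => u s y) t (Laplacian vs w mu (u t) y) ->
  derivable_pt_lim (fun s => ln (u s y)) t (Psi vs w mu Upsilon' (fun z => ln (u t z)) y).
Proof.
  intros Hu Hd. rewrite Psi_Upsilon'_ln by exact Hu.
  replace (Laplacian vs w mu (u t) y / u t y) with (/ u t y * Laplacian vs w mu (u t) y)
    by (unfold Rdiv; ring).
  exact (derivable_pt_lim_comp _ ln t _ _ Hd (derivable_pt_lim_ln _ (Hu y))).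
Qed.

Lemma derivable_pt_lim_Lalpha (a : R) (v : R -> V -> R) (t : R) (x : V) :
  a <> 0 ->
  (forall y, derivable_pt_lim (fun s => v s y) t (Psi vs w mu Upsilon' (v t) y)) ->
  derivable_pt_lim (fun s => Lalpha vs w mu a (v s) x) t (- Calpha vs w mu a (v t) x).
Proof.
  intros Ha Hv. set (P := Psi vs w mu Upsilon' (v t)) in Hv.
  set (E := fun y => exp (a * v t y - a * v t x)).
  assert (Hterm : forall y, derivable_pt_lim
      (fun s => w x y * Upsilon' (a * v s y - a * v s x)) t
      (w x y * (E y * (a * P y - a * P x) - 0))).
  { intros y. apply (derivable_pt_lim_scal (fun s => Upsilon' (a * v s y - a * v s x))).
    apply (derivable_pt_lim_minus (fun s => exp (a * v s y - a * v s x)) (fun _ => 1));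
      [|apply derivable_pt_lim_const].
    apply (derivable_pt_lim_comp (fun s => a * v s y - a * v s x) exp);
      [|apply derivable_pt_lim_exp].
    apply (derivable_pt_lim_minus (fun s => a * v s y) (fun s => a * v s x));
      apply (derivable_pt_lim_scal (fun s => v s _)); apply Hv. }
  replace (- Calpha vs w mu a (v t) x) with
    (- / a * (/ mu x * vsum vs (fun y => w x y * (E y * (a * P y - a * P x) - 0)))).
  - apply (derivable_pt_lim_scal (fun s => / mu x * _)), (derivable_pt_lim_scal (fun s => vsum vs _)).
    exact (derivable_pt_lim_vsum vs _ _ t Hterm).
  - unfold Calpha; fold P.
    rewrite (vsum_ext vs _ (fun y => a * (w x y * exp (a * (v t y - v t x)) * (P y - P x))))
      by (intros y; unfold E; replace (a * (v t y - v t x)) with (a * v t y - a * v t x) by ring; ring).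
    rewrite vsum_scal_l.
    transitivity (- (/ a * a) * (/ mu x * vsum vs (fun y => w x y * exp (a * (v t y - v t x)) * (P y - P x))));
      [ring|rewrite Rinv_l by exact Ha; ring].
Qed.

Hypothesis Hw : forall x y, 0 <= w x y.
Hypothesis Hmu : forall x, 0 < mu x.
Hypothesis Hall : forall x, In x vs.

Lemma Lop_sub_Lalpha (a : R) (v : V -> R) (x : V) :
  a <> 0 ->
  Lop vs w mu v x - Lalpha vs w mu a v x = / a * Psi vs w mu (Upsilon_a a) v x.
Proof.
  intros Ha. unfold Lop, Lalpha, Laplacian, Psi, Upsilon_a, Upsilon, Upsilon'.
  rewrite (vsum_ext vs (fun y => w x y * (exp (a * (v y - v x)) - 1 - a * (v y - v x)))
    (fun y => w x y * (exp (a * v y - a * v x) - 1) + - a * (w x y * (v y - v x)))).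
  - rewrite vsum_plus, vsum_scal_l; field; split; [apply Rgt_not_eq, Hmu|exact Ha].
  - intros y; replace (a * v y - a * v x) with (a * (v y - v x)) by ring; ring.
Qed.

Lemma Psi_pos (H : R -> R) (v : V -> R) (x z : V) :
  (forall r, 0 <= H r) -> 0 < w x z -> 0 < H (v z - v x) -> 0 < Psi vs w mu H v x.
Proof.
  intros HH Hxz Hz. unfold Psi.
  apply Rmult_lt_0_compat; [apply Rinv_0_lt_compat, Hmu|].
  eapply Rlt_le_trans; [|apply (vsum_term_le vs (fun y => w x y * H (v y - v x)) z)].
  - now apply Rmult_lt_0_compat.
  - intros y; apply Rmult_le_pos; auto.
  - apply Hall.
Qed.

(* L_alpha v x > 0 forces a neighbour z with v z < v x, where Upsilon_a is strictly positive. *)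
Lemma Lalpha_lt_Lop (a : R) (v : V -> R) (x : V) :
  0 < a -> 0 < Lalpha vs w mu a v x -> Lalpha vs w mu a v x < Lop vs w mu v x.
Proof.
  intros Ha Hpos.
  set (S := vsum vs (fun y => w x y * Upsilon' (a * v y - a * v x))).
  assert (HS : S < 0).
  { unfold Lalpha, Psi in Hpos; fold S in Hpos.
    pose proof (Rinv_0_lt_compat a Ha); pose proof (Rinv_0_lt_compat _ (Hmu x)).
    apply Rnot_le_lt; intros HS0.
    assert (0 <= / a * (/ mu x * S)) by (apply Rmult_le_pos; [lra|apply Rmult_le_pos; lra]).
    lra. }
  destruct (vsum_neg_ex vs _ HS) as [z Hz].
  assert (Hxz : 0 < w x z).
  { destruct (Rle_lt_or_eq_dec _ _ (Hw x z)) as [|Heq]; [auto|rewrite <- Heq in Hz; lra]. }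
  assert (Hdiff : a * (v z - v x) <> 0).
  { intros H0. replace (a * v z - a * v x) with (a * (v z - v x)) in Hz by ring.
    rewrite H0 in Hz; unfold Upsilon' in Hz; rewrite exp_0 in Hz; lra. }
  assert (0 < Psi vs w mu (Upsilon_a a) v x)
    by (apply (Psi_pos _ _ x z); [intros; apply Upsilon_nonneg|exact Hxz|now apply Upsilon_pos]).
  pose proof (Lop_sub_Lalpha a v x ltac:(lra)).
  assert (0 < / a * Psi vs w mu (Upsilon_a a) v x)
    by (apply Rmult_lt_0_compat; [apply Rinv_0_lt_compat|]; assumption).
  lra.
Qed.

Lemma Lalpha_le_degree (a : R) (v : V -> R) (x : V) :
  0 < a -> Lalpha vs w mu a v x <= / a * (/ mu x * vsum vs (w x)).
Proof.
  intros Ha. unfold Lalpha, Psi.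
  set (S := vsum vs (fun y => w x y * Upsilon' (a * v y - a * v x))).
  assert (HS : - S <= vsum vs (w x)).
  { unfold S; rewrite <- (Rmult_1_l (vsum vs (fun y => _))), Ropp_mult_distr_l,
      <- vsum_scal_l.
    apply vsum_le; intros y. unfold Upsilon'.
    pose proof (exp_pos (a * v y - a * v x)); pose proof (Hw x y); nra. }
  pose proof (Rinv_0_lt_compat a Ha); pose proof (Rinv_0_lt_compat _ (Hmu x)).
  replace (- / a * (/ mu x * S)) with (/ a * (/ mu x * - S)) by ring.
  apply Rmult_le_compat_l; [lra|apply Rmult_le_compat_l; lra].
Qed.

Lemma CD_alpha_F_lt_Calpha (a : R) (F : R -> R) (v : V -> R) (x : V) :
  0 < a -> CD_function F -> CD_alpha vs w mu a F ->
  0 < Lalpha vs w mu a v x ->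
  (forall y, Lalpha vs w mu a v y <= Lalpha vs w mu a v x) ->
  F (Lalpha vs w mu a v x) < Calpha vs w mu a v x.
Proof.
  intros Ha (_ & HFnonneg & _ & Hratio & _) HCD Hpos Hmax.
  pose proof (Lalpha_lt_Lop a v x Ha Hpos) as Hlt.
  eapply Rlt_le_trans; [|exact (HCD x v Hpos (fun y _ => Hmax y))].
  apply lt_of_ratio_increasing; auto. apply HFnonneg; lra.
Qed.

End Operators.

Theorem theorem4p2 (V : Type) (vs : list V) (w : V -> V -> R) (mu : V -> R)
  (a : R) (F phi : R -> R) (u : R -> V -> R) :
  0 < a < 1 ->
  weighted_graph vs w mu ->
  connected w ->
  CD_function F ->
  relaxation_function F phi ->
  CD_alpha vs w mu a F ->
  (forall t x, 0 <= t -> 0 < u t x) ->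
  heat_solution vs w mu u ->
  forall t x, 0 < t ->
    - Laplacian vs w mu (fun y => Rpower (u t y) a) x / (a * Rpower (u t x) a)
      = Lalpha vs w mu a (fun y => ln (u t y)) x /\
    Lalpha vs w mu a (fun y => ln (u t y)) x <= phi t /\
    exists d : R,
      derivable_pt_lim (fun s => ln (u s x)) t d /\
      Psi vs w mu Upsilon (fun y => ln (u t y)) x
        - / a * Psi vs w mu (Upsilon_a a) (fun y => ln (u t y)) x - phi t <= d.
Proof.
  intros Ha ((_ & Hall) & _ & Hw & _ & Hmu) _ HF (Hphipos & Hdphi & Hblowup) HCD Hpos
    (Hheat & _) t x Ht.
  assert (Hu : forall s y, 0 < s -> 0 < u s y) by (intros; apply Hpos; lra).
  assert (Hlog : forall s y, 0 < s -> derivable_pt_lim (fun r => ln (u r y)) s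
      (Psi vs w mu Upsilon' (fun z => ln (u s z)) y))
    by (intros s y Hs; apply derivable_pt_lim_ln_heat; auto).
  assert (Hbound : forall s y, 0 < s -> Lalpha vs w mu a (fun z => ln (u s z)) y <= phi s).
  { apply (comparison_principle vs (fun s => Lalpha vs w mu a (fun z => ln (u s z)))
      (fun s => Calpha vs w mu a (fun z => ln (u s z))) F phi Hall); auto.
    - intros s y Hs. apply derivable_pt_lim_Lalpha; [lra|intros z; now apply Hlog].
    - intros y. exists (/ a * (/ mu y * vsum vs (w y))). intros s _.
      apply Lalpha_le_degree; auto; lra.
    - intros s y _ Hpos' Hmax. apply CD_alpha_F_lt_Calpha; auto; lra. }
  split; [apply Lalpha_ln; auto; lra|].
  split; [now apply Hbound|].
  exists (Psi vs w mu Upsilon' (fun z => ln (u t z)) x); split; [now apply Hlog|].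
  rewrite Psi_Upsilon_split.
  pose proof (Lop_sub_Lalpha vs w mu Hmu a (fun z => ln (u t z)) x ltac:(lra)).
  pose proof (Hbound t x Ht). lra.
Qed.
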